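(* Assume Assumptions (LS) and (LT) below hold, and let $\rho$ and $G$ be the constants of Assumption (LS). There exist $C>0$, $\delta>0$ and $r_0$ such that for all $r>r_0$ and $|z|\le\rho r$, $$\mathbb{P}\left(X_r^z<\mu r-\frac{Gz^2}{r}-Cr^{1/3}\right)\ge\delta.$$
   Context: Let $\{\xi_v:v\in\mathbb{Z}^2\}$ be i.i.d. random variables with a common law $\nu$ supported on $[0,\infty)$. A directed path is an up-right nearest-neighbour path in $\mathbb{Z}^2$, and its weight is $\ell(\gamma)=\sum_{u\in\gamma}\xi_u$. For $u\preceq v$ coordinatewise, $X_{u,v}=\max_{\gamma:u\to v}\ell(\gamma)$ over directed paths from $u$ to $v$ ($-\infty$ if none). For $r\in\mathbb{N}$, $z\in\mathbb{Z}$, $X_r^z=X_{(1,1),(r-z,r+z)}$ and $X_r=X_r^0$. It is assumed that $\mu=\lim_{r\to\infty}r^{-1}\mathbb{E}[X_r]<\infty$. Assumption (LS): there exist positive finite constants $\rho,G,H,g_1,g_2$ such that for all large enough $r$ and all $z\in[-\rho r,\rho r]$, $\mathbb{E}[X_r^z]\in \mu r-G\frac{z^2}{r}+\left[-H\frac{z^4}{r^3},0\right]+\left[-g_1r^{1/3},-g_2r^{1/3}\right]$. Assumption (LT): there exists $\alpha>0$ such that for every $\varepsilon>0$ there exist positive finite $c,\theta_0,r_0$ (depending only on $\varepsilon$) such that for all $r>r_0$, $\theta>\theta_0$ and $|z|\le(1-\varepsilon)r$, $\mathbb{P}(X_r^z-\mathbb{E}[X_r^z]<-\theta r^{1/3})\le\exp(-c\theta^\alpha)$.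 *)

From HB Require Import structures.
From mathcomp Require Import all_boot all_order all_algebra.
From mathcomp Require Import all_classical all_reals all_analysis.
Set Implicit Arguments. Unset Strict Implicit. Unset Printing Implicit Defensive.
Import Order.TTheory GRing.Theory Num.Theory.
Import numFieldNormedType.Exports.
Local Open Scope classical_set_scope.
Local Open Scope ring_scope.

Definition vtx := (int * int)%type.

Definition step (p : vtx) (b : bool) : vtx :=
  if b then (p.1 + 1, p.2) else (p.1, p.2 + 1).

Definition path_vertices (u : vtx) (s : seq bool) : seq vtx :=
  u :: scanl step u s.

Definition path_len (u v : vtx) : nat := (`|v.1 - u.1| + `|v.2 - u.2|)%N.

Definition path_weight (R : realType) (T : Type) (xi : vtx -> T -> R)
  (u : vtx) (s : seq bool) (w : T) : R :=
  \sum_(x <- path_vertices u s) xi x w.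

(* X_{u,v}: maximum weight over directed paths u -> v (-oo if there is none).
   Every directed path from u to v has exactly path_len u v steps, so the
   directed paths u -> v are exactly the step sequences of that length whose
   last vertex is v. *)
Definition LPP (R : realType) (T : Type) (xi : vtx -> T -> R)
  (u v : vtx) (w : T) : \bar R :=
  \big[Order.max/-oo%E]_(s : (path_len u v).-tuple bool
        | last u (scanl step u s) == v) (path_weight xi u s w)%:E.

Definition Xrz (R : realType) (T : Type) (xi : vtx -> T -> R)
  (r : nat) (z : int) (w : T) : \bar R :=
  LPP xi (1, 1) (r%:Z - z, r%:Z + z) w.

Definition Eexp (d : measure_display) (T : measurableType d) (R : realType)
  (P : probability T R) (X : T -> \bar R) : \bar R :=
  (\int[P]_w X w)%E.

Definition iid_nonneg (d : measure_display) (T : measurableType d)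
  (R : realType) (P : probability T R) (xi : vtx -> T -> R) : Prop :=
  [/\ (forall v, measurable_fun setT (xi v)),
      (forall (F : seq vtx) (B : vtx -> set R), uniq F ->
         (forall i, measurable (B i)) ->
         P (\bigcap_(i in [set` F]) (xi i @^-1` B i)) =
         (\prod_(i <- F) P (xi i @^-1` B i))%E),
      (forall u v (B : set R), measurable B ->
         P (xi u @^-1` B) = P (xi v @^-1` B)) &
      (forall v, P [set w | 0 <= xi v w] = 1%E)].

Definition mu_limit (d : measure_display) (T : measurableType d)
  (R : realType) (P : probability T R) (xi : vtx -> T -> R) (mu : R) : Prop :=
  ((fun r : nat => (Eexp P (Xrz xi r 0) * ((r%:R : R)^-1)%:E)%E)
     @ \oo --> mu%:E).

Definition assumption_LS (d : measure_display) (T : measurableType d)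
  (R : realType) (P : probability T R) (xi : vtx -> T -> R) (mu : R)
  (rho G H g1 g2 : R) : Prop :=
  [/\ 0 < rho, 0 < G, 0 < H, 0 < g1 /\ 0 < g2 &
    exists r1 : R, forall r : nat, r1 < r%:R -> forall z : int,
      `|z%:~R| <= rho * r%:R ->
      exists a b : R,
        [/\ - H * (z%:~R) ^+ 4 / (r%:R) ^+ 3 <= a <= 0,
            - g1 * (r%:R) `^ (3^-1) <= b <= - g2 * (r%:R) `^ (3^-1) &
            Eexp P (Xrz xi r z) =
              (mu * r%:R - G * (z%:~R) ^+ 2 / r%:R + a + b)%:E]].

Definition assumption_LT (d : measure_display) (T : measurableType d)
  (R : realType) (P : probability T R) (xi : vtx -> T -> R) : Prop :=
  exists alpha : R, 0 < alpha /\
   forall eps : R, 0 < eps ->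
    exists c theta0 r0 : R, [/\ 0 < c, 0 < theta0, 0 < r0 &
      forall r : nat, r0 < r%:R -> forall theta : R, theta0 < theta ->
      forall z : int, `|z%:~R| <= (1 - eps) * r%:R ->
        (P [set w | (Xrz xi r z w - Eexp P (Xrz xi r z)
                     < (- (theta * (r%:R) `^ (3^-1)))%:E)%E]
        <= (expR (- (c * theta `^ alpha)))%:E)%E].

From mathcomp Require Import all_boot all_order all_algebra.
From mathcomp Require Import all_classical all_reals all_analysis.
From mathcomp Require Import measurable_realfun.
From mathcomp Require Import lra ring.
Import Order.TTheory GRing.Theory Num.Theory.
Local Open Scope classical_set_scope.
Local Open Scope ring_scope.

(* By (LS), E X_r^z = m <= mu r - G z^2/r - g2 s with s = r^(1/3), so it is
   enough that X_r^z < m + eps s, eps = g2/2, with probability bounded below.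
   As E (X - m)^+ = E (m - X)^+, Markov's bound for the positive part and a
   staircase bound for the negative part give, with p = P(X < m + eps s),
     eps s (1 - p) <= (th + 1) s p + s sum_k P(X < m - (th + k) s).
   By (LT) the k-th tail probability is O((th + k)^-2), so for th large the
   series is at most eps/2, whence p >= eps / (2 (eps + th + 1)).  (LT) is
   used with epsilon = 1 - rho, which is positive since (LS) forces rho < 1. *)

Lemma sum_inv_sqr_shift_le {R : realFieldType} (a : R) (n : nat) : 1 < a ->
  \sum_(k < n) (a + k%:R) ^- 2 <= (a - 1)^-1 - (a + n%:R - 1)^-1.
Proof.
move=> a_gt1; elim: n => [|n IHn]; first by rewrite big_ord0 addr0 subrr.
rewrite big_ord_recr /= -natr1.
set y := a + n%:R in IHn *.
have y_gt1 : 1 < y by rewrite /y; have := ler0n R n; lra.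
have -> : a + (n%:R + 1) - 1 = y by rewrite /y; ring.
have telescope : (y - 1)^-1 - y^-1 - y ^- 2 = (y ^+ 2 * (y - 1))^-1.
  by field; rewrite !gt_eqF //; lra.
have : 0 <= (y ^+ 2 * (y - 1))^-1 by rewrite invr_ge0 mulr_ge0 ?sqr_ge0 //; lra.
lra.
Qed.

Lemma nneseries_inv_sqr_shift_le {R : realType} {u : nat -> \bar R} {K a : R} :
  1 < a -> 0 <= K -> (forall k, 0 <= u k)%E ->
  (forall k, u k <= (K / (a + k%:R) ^+ 2)%:E)%E ->
  (\sum_(k <oo) u k <= (K / (a - 1))%:E)%E.
Proof.
move=> a_gt1 K_ge0 u_ge0 u_le.
apply: le_trans (lee_nneseries (v := fun k => (K / (a + k%:R) ^+ 2)%:E) _ _) _.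
- by move=> k _ _; exact: u_ge0.
- by move=> k _; exact: u_le.
apply: lime_le.
  by apply: is_cvg_nneseries => k _ _; rewrite lee_fin divr_ge0 ?sqr_ge0.
apply: nearW => n; rewrite /= sumEFin lee_fin big_mkord -mulr_sumr ler_wpM2l //.
have : 0 <= (a + n%:R - 1)^-1 by rewrite invr_ge0; have := ler0n R n; lra.
have := sum_inv_sqr_shift_le a n a_gt1; lra.
Qed.

Lemma expR_neg_powR_le_inv_sqr {R : realType} {c alpha : R} :
  0 < c -> 0 < alpha ->
  exists2 K : R, 0 < K & forall x, 1 <= x -> expR (- (c * x `^ alpha)) <= K / x ^+ 2.
Proof.
move=> c_gt0 alpha_gt0.
set n := Num.truncn (2 / alpha).
have alpha_n : 2 <= alpha * n.+1%:R.
  rewrite -[leLHS](@divfK _ alpha) ?gt_eqF // mulrC.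
  by apply: ler_wpM2l; [exact: ltW | exact/ltW/truncnS_gt].
have cn_gt0 : 0 < c ^+ n.+1 by exact: exprn_gt0.
have fact_gt0 : 0 < n.+1`!%:R :> R by rewrite ltr0n fact_gt0.
exists (n.+1`!%:R / c ^+ n.+1); first exact: divr_gt0.
move=> x x_ge1.
set y := c * x `^ alpha.
have y_ge0 : 0 <= y by rewrite mulr_ge0 ?powR_ge0 ?ltW.
have poly_le_exp : c ^+ n.+1 * x ^+ 2 / n.+1`!%:R <= expR y.
  apply: le_trans _ (expR_ge1Dxn n y_ge0).
  apply: le_trans _ (_ : y ^+ n.+1 / n.+1`!%:R <= _); last by rewrite lerDr.
  rewrite ler_pM2r ?invr_gt0 //.
  rewrite /y exprMn ler_pM2l // -[(x `^ alpha) ^+ _]powR_mulrn ?powR_ge0 // -powRrM.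
  by rewrite -[x ^+ 2]powR_mulrn ?ler_powR //; lra.
have lhs_gt0 : 0 < c ^+ n.+1 * x ^+ 2 / n.+1`!%:R.
  by rewrite divr_gt0 // mulr_gt0 // exprn_gt0 //; lra.
rewrite expRN; apply: le_trans (_ : (c ^+ n.+1 * x ^+ 2 / n.+1`!%:R)^-1 <= _).
  by rewrite lef_pV2 ?posrE ?expR_gt0.
by rewrite invf_div invfM mulrA.
Qed.

Lemma maxr0_le_count {R : realType} (x s th : R) : 0 < s -> 0 <= th ->
  ((Order.max x 0)%:E <= (s * (th + 1) * (0 < x)%R%:R)%:E
     + \sum_(k <oo) (s * ((th + k%:R) * s < x)%R%:R)%:E)%E.
Proof.
move=> s_gt0 th_ge0.
have term_ge0 k : (0 <= (s * ((th + k%:R) * s < x)%R%:R)%:E)%E.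
  by rewrite lee_fin; apply: mulr_ge0 => //; exact: ltW.
have series_ge0 : (0 <= \sum_(k <oo) (s * ((th + k%:R) * s < x)%R%:R)%:E)%E.
  by apply: nneseries_ge0 => k _ _; exact: term_ge0.
have [_|_] := leP x 0.
  by rewrite mulr0 add0e.
rewrite mulr1.
have [x_le|x_gt] := leP x (s * (th + 1)).
  apply: le_trans (_ : _ <= (s * (th + 1))%:E + 0)%E _; first by rewrite adde0 lee_fin.
  by rewrite leeD2l.
set n := Num.truncn (x / s - th).
have n_le : n%:R <= x / s - th.
  have : th + 1 < x / s by rewrite ltr_pdivlMr // mulrC.
  by rewrite truncn_le; lra.
have n_gt : x / s - th < n.+1%:R by exact: truncnS_gt.
apply: le_trans (_ : _ <= (s * (th + 1))%:E
  + \sum_(0 <= k < n) (s * ((th + k%:R) * s < x)%R%:R)%:E)%E _; last first.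
  by rewrite leeD2l //; apply: nneseries_lim_ge => k _ _; exact: term_ge0.
rewrite (eq_big_nat _ _ (F2 := fun _ => s%:E)) => [|k /andP[_ k_lt_n]]; last first.
  have k_lt : k.+1%:R <= n%:R :> R by rewrite ler_nat.
  have : (th + k.+1%:R) * s <= x by rewrite -ler_pdivlMr //; lra.
  rewrite -natr1 => k_le.
  suff -> : (th + k%:R) * s < x by rewrite mulr1.
  nra.
rewrite sumEFin sumr_const_nat subn0 -EFinD lee_fin.
have : x / s < th + n.+1%:R by lra.
by rewrite ltr_pdivrMr // -natr1 => ?; nra.
Qed.

Lemma measurable_lt_set {d} {T : measurableType d} {R : realType} (f : T -> R) (x : R) :
  measurable_fun setT f -> measurable [set w | f w < x].
Proof. by move=> mf; rewrite -preimage_itvNyo -[_ @^-1` _]setTI; exact: mf. Qed.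

Lemma integral_cst_probability {d} {T : measurableType d} {R : realType}
  (P : probability T R) (c : \bar R) : (\int[P]_w c = c)%E.
Proof.
have P_setT : (P : {measure set T -> \bar R}) setT = 1%E by exact: probability_setT.
by rewrite integral_cst // P_setT mule1.
Qed.

Section deviation_from_mean.
Context {d : measure_display} {T : measurableType d} {R : realType} {P : probability T R}.
Context {f : T -> R} {m : R}.
Hypotheses (mf : measurable_fun setT f) (Ef : (\int[P]_w (f w)%:E = m%:E)%E).

Let centered w : \bar R := (f w - m)%:E.

Let integrable_f : P.-integrable setT (EFin \o f).
Proof.
apply/integrableP; split; first exact/measurable_EFinP.
by rewrite integral_fin_num_abs // Ef.
Qed.

Let integrable_centered : P.-integrable setT centered.
Proof. exact: integrableB integrable_f (finite_measure_integrable_cst _ _ _). Qed.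

Lemma integral_centered_funepos_eq_funeneg :
  (\int[P]_w centered^\+ w = \int[P]_w centered^\- w)%E.
Proof.
have : (\int[P]_w centered w = 0)%E.
  rewrite integralB_EFin //; last exact: finite_measure_integrable_cst.
  by rewrite Ef integral_cst_probability subee.
rewrite integralE => centered0.
have fin_pos := integrable_pos_fin_num measurableT integrable_centered.
by move/eqP: centered0; rewrite sube_eq // add0e => /eqP.
Qed.

Let scaled_indic_ge0 (c : R) (A : set T) w : 0 <= c ->
  (0 <= c%:E * (\1_A w)%:E)%E.
Proof. by move=> c_ge0; rewrite -EFinM lee_fin mulr_ge0 // indicE. Qed.

Let measurable_scaled_indic (c : R) (A : set T) : measurable A ->
  measurable_fun setT (fun w => c%:E * (\1_A w)%:E)%E.
Proof. by move=> mA; apply/measurable_funeM/measurable_EFinP/measurable_indic. Qed.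

Let integral_scaled_indic (c : R) (A : set T) : 0 <= c -> measurable A ->
  (\int[P]_w (c%:E * (\1_A w)%:E) = c%:E * P A)%E.
Proof.
move=> c_ge0 mA; rewrite ge0_integralZl_EFin ?integral_indic ?setIT //.
exact/measurable_EFinP/measurable_indic.
Qed.

Let measurable_centered : measurable_fun setT centered.
Proof. exact/measurable_EFinP/measurable_funB. Qed.

Lemma markov_centered_funepos {c : R} : 0 <= c ->
  (c%:E * P [set w | (m + c <= f w)%R] <= \int[P]_w centered^\+ w)%E.
Proof.
move=> c_ge0.
have mA : measurable [set w | m + c <= f w].
  by rewrite -preimage_itvcy -[_ @^-1` _]setTI; exact: mf.
rewrite -integral_scaled_indic //; apply: ge0_le_integral => //.
- by move=> w _; exact: scaled_indic_ge0.
- exact: measurable_scaled_indic.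
- exact: measurable_funepos.
move=> w _; rewrite funeposE indicE.
have [/set_mem /= le_f|_] := boolP (w \in _).
  by rewrite mule1 le_max lee_fin; apply/orP; left; lra.
by rewrite mule0 le_max lexx orbT.
Qed.

Let funeneg_centered_le (s th : R) w : 0 < s -> 0 <= th ->
  (centered^\- w <= (s * (th + 1))%:E * (\1_[set w | f w < m] w)%:E
     + \sum_(k <oo) s%:E * (\1_[set w | f w < m - (th + k%:R) * s] w)%:E)%E.
Proof.
move=> s_gt0 th_ge0; rewrite funenegE -EFinN opprB -EFin_max.
have indic_lt (y : R) : \1_[set w | f w < m - y] w = (y < m - f w)%R%:R :> R.
  rewrite indicE (_ : w \in _ = (y < m - f w)%R) //.
  by apply/idP/idP => [/set_mem /= ?|?]; [lra | apply/mem_set => /=; lra].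
rewrite -[X in \1_[set w | f w < X]]subr0 indic_lt -EFinM.
under eq_eseriesr do rewrite indic_lt -EFinM.
exact: maxr0_le_count.
Qed.

Lemma integral_centered_funeneg_le {s th : R} : 0 < s -> 0 <= th ->
  (\int[P]_w centered^\- w <=
     (s * (th + 1))%:E * P [set w | (f w < m)%R]
     + s%:E * \sum_(k <oo) P [set w | (f w < m - (th + k%:R) * s)%R])%E.
Proof.
move=> s_gt0 th_ge0.
pose B k := [set w | f w < m - (th + k%:R) * s].
have mB k : measurable (B k) by exact: measurable_lt_set.
have mlt : measurable [set w | f w < m] by exact: measurable_lt_set.
have coef_ge0 : 0 <= s * (th + 1) by apply: mulr_ge0; lra.
have term_ge0 k w : (0 <= s%:E * (\1_(B k) w)%:E)%E.
  by rewrite scaled_indic_ge0 // ltW.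
rewrite -(integral_scaled_indic _ _ coef_ge0 mlt).
rewrite -nneseriesZl; last by move=> k _; exact: measure_ge0.
have -> : (\sum_(k <oo) s%:E * P (B k) =
           \sum_(k <oo) \int[P]_w (s%:E * (\1_(B k) w)%:E))%E.
  by apply: eq_eseriesr => k _; rewrite integral_scaled_indic // ltW.
rewrite -integral_nneseries //; last by move=> k; exact: measurable_scaled_indic.
rewrite -ge0_integralD //; last 4 first.
- by move=> w _; exact: scaled_indic_ge0.
- exact: measurable_scaled_indic.
- by move=> w _; apply: nneseries_ge0 => k _ _; exact: term_ge0.
- by apply: ge0_emeasurable_sum => // k _; exact: measurable_scaled_indic.
apply: ge0_le_integral => //.
- exact: measurable_funeneg.
- apply: emeasurable_funD; first exact: measurable_scaled_indic.
  by apply: ge0_emeasurable_sum => // k _; exact: measurable_scaled_indic.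
by move=> w _; exact: funeneg_centered_le.
Qed.

Lemma prob_lt_mean_add_ge {s eps th : R} : 0 < s -> 0 < eps -> 0 <= th ->
  (\sum_(k <oo) P [set w | (f w < m - (th + k%:R) * s)%R] <= (eps / 2)%:E)%E ->
  ((eps / (2 * (eps + th + 1)))%:E <= P [set w | (f w < m + eps * s)%R])%E.
Proof.
move=> s_gt0 eps_gt0 th_ge0 tail_le.
set A := [set w | f w < m + eps * s].
have mA : measurable A by exact: measurable_lt_set.
set p := fine (P A).
have PA : P A = p%:E by rewrite fineK // fin_num_measure.
have PAc : P [set w | m + eps * s <= f w] = (1 - p)%:E.
  have -> : [set w | m + eps * s <= f w] = ~` A.
    by apply/seteqP; split => w /=; rewrite leNgt => /negP.
  by rewrite probability_setC // PA.
have PA_ge : (P [set w | (f w < m)%R] <= p%:E)%E.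
  rewrite -PA; apply: le_measure; rewrite ?inE //; first exact: measurable_lt_set.
  by move=> w /= ?; rewrite /A /=; have := mulr_gt0 eps_gt0 s_gt0; lra.
have key : eps * s * (1 - p) <= s * (th + 1) * p + s * (eps / 2).
  rewrite -lee_fin EFinM -PAc.
  apply: le_trans (markov_centered_funepos (ltW (mulr_gt0 eps_gt0 s_gt0))) _.
  rewrite integral_centered_funepos_eq_funeneg EFinD !EFinM.
  apply: le_trans (integral_centered_funeneg_le s_gt0 th_ge0) _.
  apply: leeD; apply: lee_wpmul2l => //; rewrite lee_fin; [apply: mulr_ge0|]; lra.
have : eps * (1 - p) <= (th + 1) * p + eps / 2 by rewrite -(ler_pM2l s_gt0); lra.
by rewrite PA lee_fin ler_pdivrMr; lra.
Qed.

End deviation_from_mean.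

Section finite_valued_variable.
Context {d : measure_display} {T : measurableType d} {R : realType} {P : probability T R}.
Context {X : T -> \bar R}.
Hypotheses (mX : measurable_fun setT X) (X_fin : forall w, X w \is a fin_num).

Lemma le_prob_lte {y z : \bar R} : (y <= z)%E ->
  (P [set w | (X w < y)%E] <= P [set w | (X w < z)%E])%E.
Proof.
have mlt c : measurable [set w | (X w < c)%E].
  by rewrite -(setTI [set w | _]); exact: emeasurable_fun_infty_o.
move=> y_le_z; apply: le_measure; rewrite ?inE //.
by move=> w /= /lt_le_trans; apply.
Qed.

Lemma prob_lt_Eexp_add_ge {m s eps th : R} : Eexp P X = m%:E ->
  0 < s -> 0 < eps -> 0 <= th ->
  (\sum_(k <oo) P [set w | (X w - m%:E < (- ((th + k%:R) * s))%:E)%E]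
     <= (eps / 2)%:E)%E ->
  ((eps / (2 * (eps + th + 1)))%:E <= P [set w | (X w < (m + eps * s)%:E)%E])%E.
Proof.
move=> EX s_gt0 eps_gt0 th_ge0 tail_le.
pose f w := fine (X w).
have Xf w : X w = (f w)%:E by rewrite fineK.
have mf : measurable_fun setT f by exact: measurableT_comp.
have Ef : (\int[P]_w (f w)%:E = m%:E)%E.
  by rewrite -EX; apply: eq_integral => w _; rewrite Xf.
have -> : [set w | (X w < (m + eps * s)%:E)%E] = [set w | f w < m + eps * s].
  by apply/seteqP; split => w /=; rewrite Xf lte_fin.
have tail_sets k : [set w | f w < m - (th + k%:R) * s] =
                   [set w | (X w - m%:E < (- ((th + k%:R) * s))%:E)%E].
  by apply/seteqP; split => w /=; rewrite Xf -EFinB lte_fin; lra.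
apply: prob_lt_mean_add_ge => //.
by under eq_eseriesr do rewrite tail_sets.
Qed.

End finite_valued_variable.

Lemma last_scanl_step_fst_ge (u : vtx) (s : seq bool) :
  u.1 <= (last u (scanl step u s)).1.
Proof.
elim: s u => [|b s IHs] u //=; apply: le_trans (IHs (step u b)).
by case: b; rewrite /step /= ?lerDl.
Qed.

Lemma measurable_bigmaxe {d} {T : measurableType d} {R : realType} {I : finType}
  (p : pred I) (F : I -> T -> \bar R) :
  (forall i, measurable_fun setT (F i)) ->
  measurable_fun setT (fun w => \big[Order.max/-oo%E]_(i | p i) F i w).
Proof.
move=> mF; elim: (index_enum I) => [|i l IHl].
  by under eq_fun do rewrite big_nil; exact: measurable_cst.
under eq_fun do rewrite big_cons.
by case: (p i) => //; exact: measurable_maxe.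
Qed.

Section last_passage_time.
Context {d : measure_display} {T : measurableType d} {R : realType} {P : probability T R}.
Context {xi : vtx -> T -> R}.

Lemma measurable_LPP u v : (forall x, measurable_fun setT (xi x)) ->
  measurable_fun setT (LPP xi u v).
Proof.
move=> mxi; apply: measurable_bigmaxe => s; apply/measurable_EFinP.
exact: measurable_sum.
Qed.

Lemma Eexp_LPP_unreachable u v :
  (forall s : (path_len u v).-tuple bool, last u (scanl step u s) != v) ->
  Eexp P (LPP xi u v) = -oo%E.
Proof.
move=> unreachable; rewrite /Eexp (_ : LPP xi u v = cst -oo%E).
  exact: integral_cst_probability.
by apply/funext => w; rewrite /LPP big_pred0 // => s; exact/negbTE.
Qed.

Lemma LPP_fin_num u v w : Eexp P (LPP xi u v) \is a fin_num ->
  LPP xi u v w \is a fin_num.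
Proof.
have [[s reach_v] _|/forallNP unreachable] :=
  pselect (exists s : (path_len u v).-tuple bool, last u (scanl step u s) == v).
  rewrite fin_numElt (lt_le_trans (ltNyr (path_weight xi u s w))) /=.
    by apply: bigmax_lt => // s' _; exact: ltry.
  exact: le_bigmax_cond.
by rewrite Eexp_LPP_unreachable // => s; apply/negP; exact: unreachable.
Qed.

Lemma Eexp_Xrz_diag r : Eexp P (Xrz xi r r%:Z) = -oo%E.
Proof.
(* the endpoint (r - r, r + r) lies strictly left of the starting point (1, 1) *)
apply: Eexp_LPP_unreachable => s; apply/negP => /eqP reach.
by have := last_scanl_step_fst_ge (1, 1) s; rewrite reach /= subrr.
Qed.

End last_passage_time.

Section assumptions.
Context {d : measure_display} {T : measurableType d} {R : realType} {P : probability T R}.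
Context {xi : vtx -> T -> R}.

Lemma assumption_LS_rho_lt1 {mu rho G H g1 g2 : R} :
  assumption_LS P xi mu rho G H g1 g2 -> rho < 1.
Proof.
case=> _ _ _ _ [r1 LS]; rewrite ltNge; apply/negP => rho_ge1.
pose r := (Num.truncn (Order.max r1 0)).+1.
have r1_lt : r1 < r%:R.
  by apply: le_lt_trans (truncnS_gt _); rewrite le_max lexx.
have r_le : `|r%:Z%:~R| <= rho * r%:R :> R.
  by rewrite (_ : r%:Z%:~R = r%:R :> R) // normr_nat ler_peMl.
have [a [b [_ _ EX]]] := LS r r1_lt r%:Z r_le.
by move: EX; rewrite Eexp_Xrz_diag.
Qed.

Lemma assumption_LT_tail_series_le {rho eta : R} :
  assumption_LT P xi -> rho < 1 -> 0 < eta ->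
  exists th r0 : R, 0 <= th /\
    forall r : nat, r0 < r%:R -> forall z : int, `|z%:~R| <= rho * r%:R ->
      (\sum_(k <oo) P [set w | (Xrz xi r z w - Eexp P (Xrz xi r z)
                          < (- ((th + k%:R) * r%:R `^ 3^-1))%:E)%E] <= eta%:E)%E.
Proof.
move=> [alpha [alpha_gt0 LT]] rho_lt1 eta_gt0.
have [c [th0 [r0 [c_gt0 th0_gt0 _ tail]]]] := LT (1 - rho) (ltac:(lra)).
have [K K_gt0 exp_le] := expR_neg_powR_le_inv_sqr c_gt0 alpha_gt0.
(* th exceeds th0 and makes the bound K / (th - 1) on the series at most eta *)
pose th := th0 + 2 + K / eta.
have K_eta_ge0 : 0 <= K / eta by rewrite divr_ge0 ?ltW.
have th_gt1 : 1 < th by rewrite /th; lra.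
exists th, r0; split => [|r r_gt z z_le]; first lra.
apply: le_trans (nneseries_inv_sqr_shift_le th_gt1 (ltW K_gt0) _ _) _.
- by move=> k; exact: measure_ge0.
- move=> k; have := ler0n R k => k_ge0.
  apply: le_trans (tail r r_gt (th + k%:R) _ z _) _; first by rewrite /th; lra.
    by rewrite opprB addrC subrK.
  by rewrite lee_fin exp_le // /th; lra.
rewrite lee_fin ler_pdivrMr; last by rewrite /th; lra.
have : eta * (K / eta) = K by rewrite mulrC divfK ?gt_eqF.
have : 0 <= eta * th0 by rewrite mulr_ge0 ?ltW.
by rewrite /th; lra.
Qed.

End assumptions.

Theorem lemma4p2 (d : measure_display) (T : measurableType d) (R : realType)
  (P : probability T R) (xi : vtx -> T -> R) (mu rho G : R) :
  iid_nonneg P xi ->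
  mu_limit P xi mu ->
  (exists H g1 g2 : R, assumption_LS P xi mu rho G H g1 g2) ->
  assumption_LT P xi ->
  exists C delta r0 : R, [/\ 0 < C, 0 < delta &
    forall r : nat, r0 < r%:R -> forall z : int, `|z%:~R| <= rho * r%:R ->
      (delta%:E <= P [set w | (Xrz xi r z w <
         (mu * r%:R - G * (z%:~R) ^+ 2 / r%:R - C * (r%:R) `^ (3^-1))%:E)%E])%E].
Proof.
move=> [mxi _ _ _] _ [H [g1 [g2 LS]]] LT.
have rho_lt1 := assumption_LS_rho_lt1 LS.
case: LS => _ _ _ [_ g2_gt0] [r1 LS].
pose eps := g2 / 2.
have eps_gt0 : 0 < eps by rewrite /eps; lra.
have [th [r0 [th_ge0 tail_le]]] :=
  assumption_LT_tail_series_le LT rho_lt1 (ltac:(lra) : 0 < eps / 2).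
exists eps, (eps / (2 * (eps + th + 1))), (Order.max (Order.max r1 r0) 0).
split => // [|r]; first by rewrite divr_gt0 //; lra.
rewrite !gt_max => /andP[/andP[r1_lt r0_lt] r_gt0] z z_le.
have [a [b [/andP[_ a_le0] /andP[_ b_le] EX]]] := LS r r1_lt z z_le.
set s := r%:R `^ 3^-1 in b_le tail_le *.
have s_gt0 : 0 < s by rewrite powR_gt0.
have mX : measurable_fun setT (Xrz xi r z) by exact: measurable_LPP.
have X_fin w : Xrz xi r z w \is a fin_num by apply: (LPP_fin_num (P := P)); rewrite EX.
apply: le_trans (prob_lt_Eexp_add_ge mX X_fin EX s_gt0 eps_gt0 th_ge0 _) _.
  by have := tail_le r r0_lt z z_le; rewrite EX.
by apply: (le_prob_lte mX); rewrite lee_fin /eps; lra.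
Qed.
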